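(* Let $\Pi$ be the elliptic curve $u^2=s(s^2+s+7)$, let $$t=\frac12-\frac{(s^9-84s^6-378s^5-1512s^4-5208s^3-7236s^2-8127s-784)\,u}{432\,s(s+1)^2(s^2+s+7)^2},$$ and $$y=\frac12-\frac{(s^{10}+5s^9+24s^8+20s^7-266s^6-2874s^5-14812s^4-40316s^3-85359s^2-100067s-67396)\,u}{16(s+1)(s^2+s+7)(5s^6+63s^5+252s^4+854s^3+1449s^2+1827s+2030)}.$$ Then $y(t)$ is a solution of $\mathrm{P}_{\mathrm{VI}}$ with parameters $(\theta_1,\theta_2,\theta_3,\theta_4)=(4/7,4/7,4/7,1/3)$.
   Context: $\mathrm{P}_{\mathrm{VI}}$ is the equation $$\frac{d^2y}{dt^2}=\frac12\Big(\frac1y+\frac1{y-1}+\frac1{y-t}\Big)\Big(\frac{dy}{dt}\Big)^2-\Big(\frac1t+\frac1{t-1}+\frac1{y-t}\Big)\frac{dy}{dt}+\frac{y(y-1)(y-t)}{t^2(t-1)^2}\Big(\alpha+\beta\frac{t}{y^2}+\gamma\frac{t-1}{(y-1)^2}+\delta\frac{t(t-1)}{(y-t)^2}\Big),$$ with $\alpha=(\theta_4-1)^2/2$, $\beta=-\theta_1^2/2$, $\gamma=\theta_3^2/2$, $\delta=(1-\theta_2^2)/2$. When $y,t$ are given as rational functions of a parameter on a curve, derivatives with respect to $t$ are computed via the chain rule. *)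

From mathcomp Require Import all_boot all_order all_algebra.
Set Implicit Arguments. Unset Strict Implicit. Unset Printing Implicit Defensive.
Import Order.TTheory GRing.Theory Num.Theory.
Local Open Scope ring_scope.

Definition is_derivation (R : fieldType) (D : R -> R) : Prop :=
  (forall a b : R, D (a + b) = D a + D b) /\
  (forall a b : R, D (a * b) = D a * b + a * D b).

Definition PVI_alpha (R : fieldType) (th4 : R) : R := (th4 - 1) ^+ 2 / 2%:R.
Definition PVI_beta (R : fieldType) (th1 : R) : R := - (th1 ^+ 2) / 2%:R.
Definition PVI_gamma (R : fieldType) (th3 : R) : R := th3 ^+ 2 / 2%:R.
Definition PVI_delta (R : fieldType) (th2 : R) : R := (1 - th2 ^+ 2) / 2%:R.

Definition PVI_rhs (R : fieldType) (th1 th2 th3 th4 : R) (t y y1 : R) : R :=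
  (1 / 2%:R) * (1 / y + 1 / (y - 1) + 1 / (y - t)) * y1 ^+ 2
  - (1 / t + 1 / (t - 1) + 1 / (y - t)) * y1
  + y * (y - 1) * (y - t) / (t ^+ 2 * (t - 1) ^+ 2) *
    (PVI_alpha th4 + PVI_beta th1 * t / y ^+ 2
     + PVI_gamma th3 * (t - 1) / (y - 1) ^+ 2
     + PVI_delta th2 * t * (t - 1) / (y - t) ^+ 2).

(* "y(t) solves P_VI" in a differential field (K, D): derivatives with
   respect to t are computed by the chain rule d/dt = (1 / D t) D. *)
Definition solves_PVI (R : fieldType) (D : R -> R) (th1 th2 th3 th4 : R)
  (t y : R) : Prop :=
  let y1 := D y / D t in
  let y2 := D y1 / D t in
  y2 = PVI_rhs th1 th2 th3 th4 t y y1.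

Definition t_of (R : fieldType) (s u : R) : R :=
  1 / 2%:R -
  (s ^+ 9 - 84%:R * s ^+ 6 - 378%:R * s ^+ 5 - 1512%:R * s ^+ 4
   - 5208%:R * s ^+ 3 - 7236%:R * s ^+ 2 - 8127%:R * s - 784%:R) * u
  / (432%:R * s * (s + 1) ^+ 2 * (s ^+ 2 + s + 7%:R) ^+ 2).

Definition t_den (R : fieldType) (s : R) : R :=
  432%:R * s * (s + 1) ^+ 2 * (s ^+ 2 + s + 7%:R) ^+ 2.

Definition y_of (R : fieldType) (s u : R) : R :=
  1 / 2%:R -
  (s ^+ 10 + 5%:R * s ^+ 9 + 24%:R * s ^+ 8 + 20%:R * s ^+ 7
   - 266%:R * s ^+ 6 - 2874%:R * s ^+ 5 - 14812%:R * s ^+ 4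
   - 40316%:R * s ^+ 3 - 85359%:R * s ^+ 2 - 100067%:R * s - 67396%:R) * u
  / (16%:R * (s + 1) * (s ^+ 2 + s + 7%:R) *
     (5%:R * s ^+ 6 + 63%:R * s ^+ 5 + 252%:R * s ^+ 4 + 854%:R * s ^+ 3
      + 1449%:R * s ^+ 2 + 1827%:R * s + 2030%:R)).

Definition y_den (R : fieldType) (s : R) : R :=
  16%:R * (s + 1) * (s ^+ 2 + s + 7%:R) *
  (5%:R * s ^+ 6 + 63%:R * s ^+ 5 + 252%:R * s ^+ 4 + 854%:R * s ^+ 3
   + 1449%:R * s ^+ 2 + 1827%:R * s + 2030%:R).

From mathcomp Require Import all_boot all_order all_algebra.
From mathcomp Require Import ring.
Import GRing.Theory.
Set Implicit Arguments. Unset Strict Implicit. Unset Printing Implicit Defensive.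
Local Open Scope ring_scope.
Set Warnings "-abstract-large-number".

(* On the curve, t = 1/2 - A(s) u and y = 1/2 - B(s) u with A, B rational in s.
   Differentiating u^2 = s(s^2+s+7) gives D u = (rational in s) * D s / u, so
   D t and D y are both 1/u times rational functions of s, hence y' = D y / D t
   is a rational function W(s) of s alone, and y'' = D W / D t is u times one.
   The right-hand side of P_VI is odd under u |-> -u as well, so after dividing
   by u the equation becomes an identity between rational functions of s.
   Written in terms of the irreducible factors p_i of all numerators and
   denominators, its numerator is an explicit polynomial in the p_i and their
   derivatives, which vanishes identically. *)

(* The polynomial with integer coefficients [cs], lowest degree first. *)
Definition ipoly {R : nzRingType} (cs : seq int) : {poly R} := Poly (map intr cs).

Section Derivation.
Variables (R : fieldType) (D : R -> R).
Hypothesis D_der : is_derivation D.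

Lemma derD a b : D (a + b) = D a + D b. Proof. exact: D_der.1. Qed.
Lemma derM a b : D (a * b) = D a * b + a * D b. Proof. exact: D_der.2. Qed.

Lemma der0 : D 0 = 0.
Proof. by apply: (addrI (D 0)); rewrite -derD !addr0. Qed.

Lemma derN a : D (- a) = - D a.
Proof. by apply: (addrI (D a)); rewrite -derD !subrr der0. Qed.

Lemma derB a b : D (a - b) = D a - D b. Proof. by rewrite derD derN. Qed.

Lemma der1 : D 1 = 0.
Proof.
have := derM 1 1; rewrite !mulr1 mul1r => D1.
by apply: (addrI (D 1)); rewrite addr0 -D1.
Qed.

Lemma der_nat n : D n%:R = 0.
Proof. by elim: n => [|n IH]; rewrite ?der0 // mulrS derD der1 IH addr0. Qed.

Lemma der_int (z : int) : D z%:~R = 0.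
Proof. by case: z => n; rewrite ?NegzE ?mulrNz ?derN der_nat ?oppr0. Qed.

Lemma derXS a n : D (a ^+ n.+1) = n.+1%:R * a ^+ n * D a.
Proof.
elim: n => [|n IH]; first by rewrite expr1 expr0 mulr1 mul1r.
by rewrite exprS derM IH exprS; ring.
Qed.

(* Unconditional, since both sides vanish at [a = 0] ([0^-1 = 0]). *)
Lemma derV a : D a^-1 = - D a / a ^+ 2.
Proof.
have [->|a0] := eqVneq a 0; first by rewrite invr0 der0 oppr0 mul0r.
have := derM a a^-1; rewrite mulfV // der1 => /esym/eqP.
rewrite addr_eq0 => /eqP Da'.
by apply: (mulfI a0); rewrite -[a * _]opprK -Da'; field.
Qed.

Lemma der_half : D (1 / 2%:R) = 0.
Proof. by rewrite derM der1 derV der_nat oppr0 !mul0r mulr0 addr0. Qed.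

Lemma der_mul_sqrt a c u : 2%:R != 0 :> R -> u != 0 -> u ^+ 2 = c ->
  D (a * u) = (2%:R * D a * c + a * D c) / (2%:R * u).
Proof.
move=> two0 u0 uc; have Dc : D c = 2%:R * u * D u by rewrite -uc derXS expr1.
by rewrite derM Dc -uc; field; rewrite two0 u0.
Qed.

Lemma der_horner (p : {poly R}) x :
  (forall i, D p`_i = 0) -> D p.[x] = p^`().[x] * D x.
Proof.
elim/poly_ind: p => [|p c IH] Dp; first by rewrite deriv0 !horner0 der0 mul0r.
have Dc : D c = 0 by have := Dp 0%N; rewrite coefD coefMX coefC add0r.
have {}IH : D p.[x] = p^`().[x] * D x.
  by apply: IH => i; have := Dp i.+1; rewrite coefD coefMX coefC addr0.
rewrite derivMXaddC hornerMXaddC hornerD hornerMX derD derM IH Dc; ring.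
Qed.

Lemma der_ipoly_coef (cs : seq int) i : D (ipoly cs)`_i = 0.
Proof.
rewrite /ipoly coef_Poly.
have [lt_i_cs|le_cs_i] := ltnP i (size cs).
  by rewrite (nth_map (0 : int)) // der_int.
by rewrite nth_default ?size_map // der0.
Qed.

End Derivation.

Lemma char0_natr_neq0 (R : fieldType) : [pchar R] =i pred0 -> forall n, n.+1%:R != 0 :> R.
Proof. by move/pcharf0P => charR n; rewrite charR. Qed.

Fixpoint deriv_horner_rec {R : nzRingType} (cs : seq R) (x : R) : R :=
  if cs is c :: cs' then horner_rec cs' x + deriv_horner_rec cs' x * x else 0.

Lemma horner_deriv_Poly {R : nzRingType} (cs : seq R) x :
  (Poly cs)^`().[x] = deriv_horner_rec cs x.
Proof.
elim: cs => [|c cs IH] /=; first by rewrite deriv0 horner0.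
by rewrite cons_poly_def derivMXaddC hornerD hornerMX IH horner_Poly.
Qed.

Lemma horner_ipoly {R : nzRingType} (cs : seq int) (x : R) :
  (ipoly cs).[x] = horner_rec (map intr cs) x.
Proof. exact: horner_Poly. Qed.

Lemma horner_deriv_ipoly {R : nzRingType} (cs : seq int) (x : R) :
  (ipoly cs)^`().[x] = deriv_horner_rec (map intr cs) x.
Proof. exact: horner_deriv_Poly. Qed.

Lemma neq0_eq (R : nzRingType) (x y : R) : y != 0 -> x = y -> x != 0.
Proof. by move=> y0 ->. Qed.

(* Derivatives are evaluated first: matching [(ipoly _).[_]] against
   [p^`().[_]] would make Rocq compute [deriv] on a concrete polynomial. *)
Ltac eval_factors :=
  rewrite ?horner_deriv_ipoly ?horner_ipoly; cbv [horner_rec deriv_horner_rec map].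

Ltac neq0_by_eval :=
  match goal with H : is_true (~~ (horner _ _ == _)) |- _ =>
    by apply: (neq0_eq H); eval_factors; ring end.

Ltac field_side R_char0 :=
  repeat (apply/andP; split); rewrite ?oppr_eq0;
  repeat (apply: mulf_neq0 || apply: expf_neq0 || apply: invr_neq0);
  rewrite ?(char0_natr_neq0 R_char0) //; neq0_by_eval.

Ltac der_expand D_der := rewrite !(der_nat D_der, der1 D_der, der_horner D_der,
  derXS D_der, derV D_der, derM D_der); try exact: der_ipoly_coef.

(* The irreducible factors of the numerators and denominators of t, y and of
   their derivatives; the curve is u^2 = p0 p2.  Coefficients are written
   [n%:Z]: an [int] literal would be expanded into a unary [nat]. *)
Definition p0 {R : nzRingType} : {poly R} := ipoly [:: 0%:Z; 1%:Z].
Definition p1 {R : nzRingType} : {poly R} := ipoly [:: 1%:Z; 1%:Z].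
Definition p2 {R : nzRingType} : {poly R} := ipoly [:: 7%:Z; 1%:Z; 1%:Z].
Definition p3 {R : nzRingType} : {poly R} :=
  ipoly [:: 2030%:Z; 1827%:Z; 1449%:Z; 854%:Z; 252%:Z; 63%:Z; 5%:Z].
Definition p4 {R : nzRingType} : {poly R} := ipoly [:: - 1%:Z; 1%:Z].
Definition p5 {R : nzRingType} : {poly R} := ipoly [:: 7%:Z; 4%:Z; 1%:Z].
Definition p6 {R : nzRingType} : {poly R} := ipoly [:: 16%:Z; 1%:Z; 1%:Z].
Definition p7 {R : nzRingType} : {poly R} := ipoly [:: - 7%:Z; 1%:Z].
Definition p8 {R : nzRingType} : {poly R} :=
  ipoly [:: 336400%:Z; 814088%:Z; 1021641%:Z; 795466%:Z; 473805%:Z; 202120%:Z;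
            67874%:Z; 17148%:Z; 3298%:Z; 544%:Z; 85%:Z; 10%:Z; 1%:Z].
Definition p9 {R : nzRingType} : {poly R} :=
  ipoly [:: 290%:Z; 1218%:Z; 792%:Z; 452%:Z; 123%:Z; 36%:Z; 5%:Z].
Definition p10 {R : nzRingType} : {poly R} :=
  ipoly [:: 218660%:Z; 337183%:Z; 351045%:Z; 207340%:Z; 97247%:Z; 34746%:Z;
            9877%:Z; 2852%:Z; 633%:Z; 119%:Z; 10%:Z].
Definition p11 {R : nzRingType} : {poly R} :=
  ipoly [:: 136813880%:Z; 408096178%:Z; 787740891%:Z; 879206328%:Z; 686239869%:Z;
            418858776%:Z; 197182993%:Z; 78706274%:Z; 25343055%:Z; 7284658%:Z;
            1878341%:Z; 475212%:Z; 114243%:Z; 25380%:Z; 3951%:Z; 506%:Z; 25%:Z].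
Definition p12 {R : nzRingType} : {poly R} :=
  ipoly [:: - 784%:Z; - 8127%:Z; - 7236%:Z; - 5208%:Z; - 1512%:Z; - 378%:Z; - 84%:Z;
            0%:Z; 0%:Z; 1%:Z].
Definition p13 {R : nzRingType} : {poly R} :=
  ipoly [:: - 67396%:Z; - 100067%:Z; - 85359%:Z; - 40316%:Z; - 14812%:Z; - 2874%:Z;
            - 266%:Z; 20%:Z; 24%:Z; 5%:Z; 1%:Z].

Definition cubic {R : fieldType} (s : R) : R := p0.[s] * p2.[s].
Definition tcoef {R : fieldType} (s : R) : R :=
  p12.[s] / (432%:R * p0.[s] * p1.[s] ^+ 2 * p2.[s] ^+ 2).
Definition ycoef {R : fieldType} (s : R) : R :=
  p13.[s] / (16%:R * p1.[s] * p2.[s] * p3.[s]).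
Definition tdot {R : fieldType} (s : R) : R :=
  7%:R / 432%:R * (p4.[s] ^+ 6 * p5.[s] ^+ 2 * p6.[s]) / (p0.[s] * p1.[s] ^+ 3 * p2.[s] ^+ 2).
Definition ydot {R : fieldType} (s : R) : R :=
  1 / 16%:R * (p4.[s] * p5.[s] * p11.[s]) / (p1.[s] ^+ 2 * p2.[s] * p3.[s] ^+ 2).
Definition slope {R : fieldType} (s : R) : R :=
  27%:R / 7%:R * (p0.[s] * p1.[s] * p2.[s] * p11.[s])
  / (p3.[s] ^+ 2 * p4.[s] ^+ 5 * p5.[s] * p6.[s]).
Definition coef_gap {R : fieldType} (s : R) : R :=
  1 / 432%:R * (p4.[s] ^+ 2 * p5.[s] ^+ 2 * p6.[s] * p7.[s] * p9.[s])
  / (p0.[s] * p1.[s] ^+ 2 * p2.[s] ^+ 2 * p3.[s]).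
Definition yquad {R : fieldType} (s : R) : R :=
  1 / 256%:R * (p4.[s] ^+ 2 * p5.[s] ^+ 2 * p6.[s] * p7.[s] * p8.[s])
  / (p1.[s] ^+ 2 * p2.[s] * p3.[s] ^+ 2).
Definition tquad {R : fieldType} (s : R) : R :=
  1 / 2304%:R / 81%:R * (p4.[s] ^+ 7 * p5.[s] ^+ 3 * p6.[s] ^+ 2 * p7.[s])
  / (p0.[s] * p1.[s] ^+ 4 * p2.[s] ^+ 3).
Definition tyquad {R : fieldType} (s : R) : R :=
  1 / 2304%:R / 3%:R * (p4.[s] ^+ 4 * p5.[s] ^+ 3 * p6.[s] ^+ 2 * p7.[s] * p10.[s])
  / (p1.[s] ^+ 3 * p2.[s] ^+ 2 * p3.[s] ^+ 2).

Lemma cubicE {R : fieldType} (s : R) : cubic s = s * (s ^+ 2 + s + 7%:R).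
Proof. by rewrite /cubic; eval_factors; ring. Qed.

Lemma t_denE {R : fieldType} (s : R) :
  t_den s = 432%:R * p0.[s] * p1.[s] ^+ 2 * p2.[s] ^+ 2.
Proof. by rewrite /t_den; eval_factors; ring. Qed.

Lemma y_denE {R : fieldType} (s : R) : y_den s = 16%:R * p1.[s] * p2.[s] * p3.[s].
Proof. by rewrite /y_den; eval_factors; ring. Qed.

Lemma t_ofE {R : fieldType} (s u : R) : t_of s u = 1 / 2%:R - tcoef s * u.
Proof.
rewrite /t_of -/(t_den s) t_denE /tcoef mulrAC; congr (_ - _ * _ * _).
by eval_factors; ring.
Qed.

Lemma y_ofE {R : fieldType} (s u : R) : y_of s u = 1 / 2%:R - ycoef s * u.
Proof.
rewrite /y_of -/(y_den s) y_denE /ycoef mulrAC; congr (_ - _ * _ * _).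
by eval_factors; ring.
Qed.

Section CurveFactorisations.
Variables (R : fieldType) (s : R).
Hypotheses (R_char0 : [pchar R] =i pred0)
  (p0s : p0.[s] != 0) (p1s : p1.[s] != 0) (p2s : p2.[s] != 0) (p3s : p3.[s] != 0).

Ltac factorise :=
  rewrite /tcoef /ycoef /cubic /coef_gap /yquad /tquad /tyquad; eval_factors; field;
  field_side R_char0.

Lemma tcoef_sub_ycoef : tcoef s - ycoef s = coef_gap s.
Proof. factorise. Qed.

Lemma ycoef_quad : ycoef s ^+ 2 * cubic s - 1 / 4%:R = yquad s.
Proof. factorise. Qed.

Lemma tcoef_quad : tcoef s ^+ 2 * cubic s - 1 / 4%:R = tquad s.
Proof. factorise. Qed.

Lemma tycoef_quad :
  2%:R * tcoef s * ycoef s * cubic s - ycoef s ^+ 2 * cubic s - 1 / 4%:R = tyquad s.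
Proof. factorise. Qed.

End CurveFactorisations.

(* [u] times this is the right-hand side of P_VI at [t = 1/2 - A u],
   [y = 1/2 - B u], where [Y = y (y - 1)], [T = t (t - 1)], [d u = y - t],
   [G = 2 t y - y^2 - t] and [U = u^2]. *)
Definition pvi_odd_part (R : fieldType) (A B d Y T G U W : R) : R :=
  W ^+ 2 / 2%:R * (- 2%:R * B / Y + 1 / (d * U))
  - W * (- 2%:R * A / T + 1 / (d * U))
  + Y * d / T ^+ 2 * (2%:R / 9%:R + 8%:R / 49%:R * G / Y ^+ 2 + 33%:R / 98%:R * T / (d ^+ 2 * U)).

Lemma PVI_rhs_odd (R : fieldType) (t y u W : R) : [pchar R] =i pred0 ->
  u != 0 -> t != 0 -> t != 1 -> y != 0 -> y != 1 -> y != t ->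
  PVI_rhs (4%:R / 7%:R) (4%:R / 7%:R) (4%:R / 7%:R) (1 / 3%:R) t y W =
  u * pvi_odd_part ((1 / 2%:R - t) / u) ((1 / 2%:R - y) / u) ((y - t) / u)
        (y * (y - 1)) (t * (t - 1)) (2%:R * t * y - y ^+ 2 - t) (u ^+ 2) W.
Proof.
move=> R_char0 u0 t0 t1 y0 y1 yt.
rewrite /PVI_rhs /PVI_alpha /PVI_beta /PVI_gamma /PVI_delta /pvi_odd_part.
field; rewrite u0 t0 y0 !subr_eq0 t1 y1 yt.
by rewrite !(char0_natr_neq0 R_char0).
Qed.

(* The numerator of [D (slope s) + tdot s / 2 * pvi_odd_part ... * D s] once
   the denominator [98 p3^3 p4^12 p5^4 p6^3 p7 p8 p9 / (tdot s * D s)] is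
   cleared, as a polynomial in the values and derivatives of the factors; its
   last summand comes from the logarithmic derivative of [slope]. *)
Definition residual {R : fieldType} (s : R) : R :=
  - 11664%:R * (p0.[s] ^+ 2 * p1.[s] ^+ 3 * p2.[s] ^+ 2 * p9.[s] * p11.[s] ^+ 2 * p13.[s])
  + 157464%:R * (p0.[s] ^+ 2 * p1.[s] ^+ 4 * p2.[s] ^+ 3 * p8.[s] * p11.[s] ^+ 2)
  + 163296%:R * (p0.[s] * p1.[s] ^+ 3 * p2.[s] ^+ 2 * p3.[s] * p8.[s] * p9.[s] * p11.[s]
                 * p12.[s])
  - 81648%:R * (p0.[s] * p1.[s] ^+ 3 * p2.[s] ^+ 2 * p3.[s] ^+ 2 * p4.[s] ^+ 5 * p5.[s]
                * p6.[s] * p8.[s] * p11.[s])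
  + 3429216%:R * (p0.[s] * p1.[s] ^+ 4 * p2.[s] ^+ 3 * p4.[s] ^+ 2 * p5.[s] ^+ 2 * p6.[s]
                  * p7.[s] * p8.[s] ^+ 2 * p9.[s] ^+ 2)
  + 23887872%:R * (p0.[s] * p1.[s] ^+ 5 * p2.[s] ^+ 3 * p3.[s] ^+ 2 * p4.[s] ^+ 2 * p5.[s]
                   * p6.[s] * p9.[s] ^+ 2 * p10.[s])
  + 5196312%:R * (p0.[s] * p1.[s] ^+ 4 * p2.[s] ^+ 3 * p3.[s] ^+ 2 * p4.[s] ^+ 5 * p5.[s]
                  * p6.[s] * p8.[s] ^+ 2)
  + 23328%:R * (p0.[s] * p1.[s] ^+ 3 * p2.[s] ^+ 2 * p7.[s] * p8.[s] * p9.[s]) *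
    (  p1.[s] * p2.[s] * p3.[s] * p4.[s] * p5.[s] * p6.[s] * p11.[s] * p0^`().[s]
     + p0.[s] * p2.[s] * p3.[s] * p4.[s] * p5.[s] * p6.[s] * p11.[s] * p1^`().[s]
     + p0.[s] * p1.[s] * p3.[s] * p4.[s] * p5.[s] * p6.[s] * p11.[s] * p2^`().[s]
     + p0.[s] * p1.[s] * p2.[s] * p3.[s] * p4.[s] * p5.[s] * p6.[s] * p11^`().[s]
     - 2%:R * (p0.[s] * p1.[s] * p2.[s] * p4.[s] * p5.[s] * p6.[s] * p11.[s] * p3^`().[s])
     - 5%:R * (p0.[s] * p1.[s] * p2.[s] * p3.[s] * p5.[s] * p6.[s] * p11.[s] * p4^`().[s])
     - p0.[s] * p1.[s] * p2.[s] * p3.[s] * p4.[s] * p6.[s] * p11.[s] * p5^`().[s]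
     - p0.[s] * p1.[s] * p2.[s] * p3.[s] * p4.[s] * p5.[s] * p11.[s] * p6^`().[s]).

Lemma residual0 (R : fieldType) (s : R) : residual s = 0.
Proof. by rewrite /residual; eval_factors; ring. Qed.

Section SlopeEquation.
Variables (R : fieldType) (D : R -> R) (s : R).
Hypotheses (R_char0 : [pchar R] =i pred0) (D_der : is_derivation D).
Hypotheses (p0s : p0.[s] != 0) (p1s : p1.[s] != 0) (p2s : p2.[s] != 0) (p3s : p3.[s] != 0)
  (p4s : p4.[s] != 0) (p5s : p5.[s] != 0) (p6s : p6.[s] != 0) (p7s : p7.[s] != 0)
  (p8s : p8.[s] != 0) (p9s : p9.[s] != 0).

Lemma slope_equation : D (slope s) =
  - tdot s / 2%:R * pvi_odd_part (tcoef s) (ycoef s) (coef_gap s) (yquad s) (tquad s)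
      (tyquad s) (cubic s) (slope s) * D s.
Proof.
apply/eqP; rewrite -subr_eq0; apply/eqP.
rewrite -[RHS](mulr0 (tdot s * D s / (98%:R *
  (p3.[s] ^+ 3 * p4.[s] ^+ 12 * p5.[s] ^+ 4 * p6.[s] ^+ 3 * p7.[s] * p8.[s] * p9.[s])))).
rewrite -(residual0 s) /slope; der_expand D_der.
rewrite /residual /tdot /pvi_odd_part /tcoef /ycoef /coef_gap /yquad /tquad /tyquad /cubic.
field.
by rewrite p0s p1s p2s p3s p4s p5s p6s p7s p8s p9s !(char0_natr_neq0 R_char0).
Qed.

End SlopeEquation.

Section Solution.
Variables (R : fieldType) (D : R -> R) (s u : R).
Hypotheses (R_char0 : [pchar R] =i pred0) (D_der : is_derivation D)
  (curve : u ^+ 2 = s * (s ^+ 2 + s + 7%:R)) (Ds0 : D s != 0)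
  (t_den0 : t_den s != 0) (y_den0 : y_den s != 0) (Dt0 : D (t_of s u) != 0)
  (t0 : t_of s u != 0) (t1 : t_of s u != 1)
  (y0 : y_of s u != 0) (y1 : y_of s u != 1) (yt : y_of s u != t_of s u).

Let ucubic : u ^+ 2 = cubic s. Proof. by rewrite cubicE. Qed.

Lemma t_den_factors_neq0 : [/\ p0.[s] != 0, p1.[s] != 0 & p2.[s] != 0].
Proof. by split; apply: contraNneq t_den0 => e; apply/eqP; rewrite t_denE e; ring. Qed.

Lemma p3_neq0 : p3.[s] != 0.
Proof. by apply: contraNneq y_den0 => e; apply/eqP; rewrite y_denE e; ring. Qed.

Lemma u_neq0 : u != 0.
Proof.
have [p0s _ p2s] := t_den_factors_neq0.
apply: contraNneq (mulf_neq0 p0s p2s) => u0.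
by rewrite -[_ * _]/(cubic s) -ucubic u0 expr0n.
Qed.

Lemma der_t_of : D (t_of s u) = - tdot s / (2%:R * u) * D s.
Proof.
have [p0s p1s p2s] := t_den_factors_neq0; have u0 := u_neq0.
have two0 : 2%:R != 0 :> R := char0_natr_neq0 R_char0 1.
rewrite t_ofE (derB D_der) (der_half D_der) sub0r (der_mul_sqrt D_der _ two0 u0 ucubic).
rewrite /tcoef /cubic; der_expand D_der.
rewrite /tdot; eval_factors; field; field_side R_char0.
Qed.

Lemma der_y_of : D (y_of s u) = - ydot s / (2%:R * u) * D s.
Proof.
have [_ p1s p2s] := t_den_factors_neq0; have p3s := p3_neq0; have u0 := u_neq0.
have two0 : 2%:R != 0 :> R := char0_natr_neq0 R_char0 1.
rewrite y_ofE (derB D_der) (der_half D_der) sub0r (der_mul_sqrt D_der _ two0 u0 ucubic).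
rewrite /ycoef /cubic; der_expand D_der.
rewrite /ydot; eval_factors; field; field_side R_char0.
Qed.

Lemma tdot_factors_neq0 : [/\ p4.[s] != 0, p5.[s] != 0 & p6.[s] != 0].
Proof. by split; apply: contraNneq Dt0 => e; apply/eqP; rewrite der_t_of /tdot e; ring. Qed.

Lemma y_sub_t_of : y_of s u - t_of s u = coef_gap s * u.
Proof.
have [p0s p1s p2s] := t_den_factors_neq0; have p3s := p3_neq0.
by rewrite y_ofE t_ofE -tcoef_sub_ycoef //; ring.
Qed.

Lemma y_of_quad : y_of s u * (y_of s u - 1) = yquad s.
Proof.
have [p0s p1s p2s] := t_den_factors_neq0; have p3s := p3_neq0.
by rewrite -ycoef_quad // -ucubic y_ofE; field; field_side R_char0.
Qed.

Lemma t_of_quad : t_of s u * (t_of s u - 1) = tquad s.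
Proof.
have [p0s p1s p2s] := t_den_factors_neq0; have p3s := p3_neq0.
by rewrite -tcoef_quad // -ucubic t_ofE; field; field_side R_char0.
Qed.

Lemma coef_gap_factors_neq0 : p7.[s] != 0 /\ p9.[s] != 0.
Proof.
split; apply: contraNneq yt => e.
  by rewrite -subr_eq0 y_sub_t_of /coef_gap e; apply/eqP; ring.
by rewrite -subr_eq0 y_sub_t_of /coef_gap e; apply/eqP; ring.
Qed.

Lemma p8_neq0 : p8.[s] != 0.
Proof.
have yy1 : y_of s u * (y_of s u - 1) != 0 by rewrite mulf_neq0 // subr_eq0.
by apply: contraNneq yy1 => e; rewrite y_of_quad /yquad e; apply/eqP; ring.
Qed.

Lemma dydt : D (y_of s u) / D (t_of s u) = slope s.
Proof.
have [p0s p1s p2s] := t_den_factors_neq0; have p3s := p3_neq0; have u0 := u_neq0.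
have [p4s p5s p6s] := tdot_factors_neq0.
by rewrite der_y_of der_t_of /ydot /tdot /slope; field; field_side R_char0.
Qed.

Lemma PVI_rhs_curve W :
  PVI_rhs (4%:R / 7%:R) (4%:R / 7%:R) (4%:R / 7%:R) (1 / 3%:R) (t_of s u) (y_of s u) W =
  u * pvi_odd_part (tcoef s) (ycoef s) (coef_gap s) (yquad s) (tquad s) (tyquad s)
        (cubic s) W.
Proof.
have [p0s p1s p2s] := t_den_factors_neq0; have p3s := p3_neq0; have u0 := u_neq0.
rewrite (@PVI_rhs_odd _ _ _ u) //; congr (_ * pvi_odd_part _ _ _ _ _ _ _ _).
- by rewrite t_ofE; field; field_side R_char0.
- by rewrite y_ofE; field; field_side R_char0.
- by rewrite y_sub_t_of mulfK.
- exact: y_of_quad.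
- exact: t_of_quad.
- by rewrite -tycoef_quad // -ucubic t_ofE y_ofE; field; field_side R_char0.
- exact: ucubic.
Qed.

Lemma solves_PVI_curve :
  solves_PVI D (4%:R / 7%:R) (4%:R / 7%:R) (4%:R / 7%:R) (1 / 3%:R) (t_of s u) (y_of s u).
Proof.
have [p0s p1s p2s] := t_den_factors_neq0; have p3s := p3_neq0; have u0 := u_neq0.
have [p4s p5s p6s] := tdot_factors_neq0; have [p7s p9s] := coef_gap_factors_neq0.
have p8s := p8_neq0.
have tdot0 : tdot s != 0 by apply: contraNneq Dt0 => e; apply/eqP; rewrite der_t_of e; ring.
rewrite /solves_PVI /= dydt slope_equation // der_t_of PVI_rhs_curve.
by field; field_side R_char0.
Qed.

End Solution.

Theorem mainTheorem15 (R : fieldType) (D : R -> R) (s u : R) :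
  [pchar R] =i pred0 ->
  is_derivation D ->
  u ^+ 2 = s * (s ^+ 2 + s + 7%:R) ->
  D s != 0 ->
  t_den s != 0 -> y_den s != 0 ->
  D (t_of s u) != 0 ->
  t_of s u != 0 -> t_of s u != 1 ->
  y_of s u != 0 -> y_of s u != 1 -> y_of s u != t_of s u ->
  solves_PVI D (4%:R / 7%:R) (4%:R / 7%:R) (4%:R / 7%:R) (1 / 3%:R)
    (t_of s u) (y_of s u).
Proof. by move=> *; apply: solves_PVI_curve. Qed.
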